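(* Let $(V,\mathcal H,\iota,W)$ be a generalized functional theory. Then $\overrightarrow{\mathrm{aff}(\iota^*(\mathcal P))}=\overrightarrow{\mathrm{aff}(\iota^*(\mathcal E))}$, and this space is canonically isomorphic to $\big(V/\iota^{-1}(\mathrm{span}\{\mathbb 1\})\big)^*$.
   Context: A generalized functional theory is a tuple $(V,\mathcal H,\iota,W)$ with $V$ a finite-dimensional real vector space, $\mathcal H$ a finite-dimensional complex Hilbert space, $\iota:V\to i\mathfrak u(\mathcal H)$ a linear map into the real vector space of Hermitian operators, and $W$ Hermitian. Density operators are regarded as elements of $(i\mathfrak u(\mathcal H))^*$ via $\Gamma\mapsto\mathrm{Tr}(\Gamma\,\cdot)$, and $\iota^*$ denotes the dual map. $\mathcal P$ is the set of pure states (rank-one projectors) and $\mathcal E$ the set of density operators. $\mathrm{aff}(X)$ is the affine hull and $\overrightarrow A=\{a-b:a,b\in A\}$ the translation space of an affine set $A$. $\mathbb 1$ is the identity operator on $\mathcal H$. *)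

From HB Require Import structures.
From mathcomp Require Import all_boot all_order all_algebra.
From mathcomp Require Import complex.
Set Implicit Arguments. Unset Strict Implicit. Unset Printing Implicit Defensive.
Import Order.TTheory GRing.Theory Num.Theory.
Local Open Scope ring_scope.

Section GFT.
Variable R : rcfType.
Local Notation C := R[i].

Definition adjmx (m n : nat) (A : 'M[C]_(m, n)) : 'M[C]_(n, m) :=
  (map_mx (@conjc R) A)^T.

Definition herm_op (n : nat) (A : 'M[C]_n) : Prop := adjmx A = A.

Definition real_linear_herm (V : vectType R) (n : nat) (iota : V -> 'M[C]_n) : Prop :=
  (forall v, herm_op (iota v)) /\
  (forall (a : R) (u v : V), iota (a *: u + v) = (a%:C)%C *: iota u + iota v).

Definition pure_state (n : nat) (G : 'M[C]_n) : Prop :=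
  herm_op G /\ G *m G = G /\ \rank G = 1%N.

Definition density_op (n : nat) (G : 'M[C]_n) : Prop :=
  herm_op G /\ (forall x : 'cV[C]_n, 0 <= (adjmx x *m G *m x) 0 0) /\ \tr G = 1.

(* iota^* : density operator (as a functional on Hermitian operators) mapped to V^*;
   elements of V^* are represented as (linear) functions V -> R. *)
Definition dual_map (V : vectType R) (n : nat) (iota : V -> 'M[C]_n)
  (G : 'M[C]_n) : V -> R := fun v => complex.Re (\tr (G *m iota v)).

Definition image_dual (V : vectType R) (n : nat) (iota : V -> 'M[C]_n)
  (S : 'M[C]_n -> Prop) (f : V -> R) : Prop :=
  exists2 G, S G & f = dual_map iota G.

Definition aff_hull (V : vectType R) (X : (V -> R) -> Prop) (f : V -> R) : Prop :=
  exists (k : nat) (c : 'I_k -> R) (g : 'I_k -> V -> R),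
    (forall i, X (g i)) /\
    \sum_(i < k) c i = 1 /\
    f = (fun v => \sum_(i < k) c i * g i v).

Definition direction (V : vectType R) (A : (V -> R) -> Prop) (f : V -> R) : Prop :=
  exists a b, A a /\ A b /\ f = (fun v => a v - b v).

Definition lin_functional (V : vectType R) (f : V -> R) : Prop :=
  forall (a : R) (u v : V), f (a *: u + v) = a * f u + f v.

Definition preim_span_id (V : vectType R) (n : nat) (iota : V -> 'M[C]_n) (v : V) : Prop :=
  exists r : R, iota v = ((r%:C)%C)%:M.

(* annihilator of iota^{-1}(span{1}) in V^*, the canonical image of
   (V / iota^{-1}(span{1}))^* in V^* *)
Definition annihilator_preim_id (V : vectType R) (n : nat) (iota : V -> 'M[C]_n)
  (f : V -> R) : Prop :=
  lin_functional f /\ (forall v, preim_span_id iota v -> f v = 0).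

End GFT.

From HB Require Import structures.
From mathcomp Require Import all_boot all_order all_algebra.
From mathcomp Require Import complex ring lra.
From Stdlib Require Import FunctionalExtensionality.
Import Order.TTheory GRing.Theory Num.Theory.
Local Open Scope ring_scope.
Local Open Scope complex_scope.
Set Implicit Arguments. Unset Strict Implicit. Unset Printing Implicit Defensive.

(* A difference of two affine combinations of density operators is a traceless A, and
   v |-> Re tr(A iota(v)) vanishes wherever iota(v) is a multiple of 1; pure states are
   density operators.  Conversely, finitely many rank-one projectors P_t (onto e_k, e_k + e_l
   and e_k + i e_l) separate Hermitian matrices, so the functionals
   (v, s) |-> Re tr(P_t iota(v)) + s on V x R have common kernel {(v, s) | iota(v) = -s 1}.
   A linear f vanishing on iota^-1(R 1) is therefore f(v) = sum_t z_t (Re tr(P_t iota(v)) + s);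
   evaluating at (0, 1) gives sum_t z_t = 0, so f lies in the direction of aff(iota^*(P)). *)

Lemma submx_annihilator (F : fieldType) m n (A : 'M[F]_(m, n)) (w : 'rV_n) :
  (forall x : 'cV_n, A *m x = 0 -> w *m x = 0) -> (w <= A)%MS.
Proof.
move=> Aw; rewrite submxE; apply/eqP/matrixP => i j.
have /Aw : A *m col j (cokermx A) = 0 by rewrite colE mulmxA mulmx_coker mul0mx.
by rewrite colE mulmxA -colE => /matrixP/(_ i 0); rewrite !mxE.
Qed.

Section LinearFunctionals.
Variables (R : rcfType) (W : vectType R).

Lemma lin_functional0 (f : W -> R) : lin_functional f -> f 0 = 0.
Proof.
move=> lin_f; have := lin_f 1 0 0; rewrite scale1r addr0 mul1r => f0.
by apply: (addrI (f 0)); rewrite addr0 -f0.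
Qed.

Lemma lin_functional_sum (f : W -> R) k (c : 'I_k -> R) (x : 'I_k -> W) :
  lin_functional f -> f (\sum_(i < k) c i *: x i) = \sum_(i < k) c i * f (x i).
Proof.
move=> lin_f; elim: k c x => [|k IHk] c x; first by rewrite !big_ord0 lin_functional0.
by rewrite !big_ord_recr /= addrC lin_f addrC IHk.
Qed.

Lemma lin_functional_coord (f : W -> R) (v : W) : lin_functional f ->
  f v = \sum_(j < \dim {:W}) coord (vbasis fullv) j v * f (vbasis fullv)`_j.
Proof. by move=> lin_f; rewrite {1}(coord_vbasis (memvf v)) lin_functional_sum. Qed.

Lemma lin_functional_in_span N (g : 'I_N -> W -> R) (f : W -> R) :
  (forall t, lin_functional (g t)) -> lin_functional f ->
  (forall w, (forall t, g t w = 0) -> f w = 0) ->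
  exists z : 'I_N -> R, forall w, f w = \sum_(t < N) z t * g t w.
Proof.
move=> lin_g lin_f ker_g_f.
pose e j := (vbasis {:W})`_j.
pose M : 'M[R]_(N, \dim {:W}) := \matrix_(t, j) g t (e j).
have /submxP[z fE] : ((\row_j f (e j)) <= M)%MS.
  apply: submx_annihilator => x Mx0.
  pose v := \sum_j x j 0 *: e j.
  have /ker_g_f : forall t, g t v = 0.
    move=> t; move/matrixP/(_ t 0): Mx0; rewrite !mxE => Mx0.
    rewrite lin_functional_sum // -[RHS]Mx0.
    by apply: eq_bigr => j _; rewrite mxE mulrC.
  rewrite lin_functional_sum // => fv0; apply/matrixP => i0 j0; rewrite !ord1 !mxE -[RHS]fv0.
  by apply: eq_bigr => j _; rewrite mxE mulrC.
exists (fun t => z 0 t) => w; rewrite lin_functional_coord //.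
under [RHS]eq_bigr => t _ do rewrite (lin_functional_coord w (lin_g t)) mulr_sumr.
rewrite exchange_big /=; apply: eq_bigr => j _.
move/matrixP/(_ 0 j): fE; rewrite !mxE => ->; rewrite mulr_sumr.
by apply: eq_bigr => t _; rewrite mxE mulrCA.
Qed.

End LinearFunctionals.

Lemma mxtrace_idem (F : fieldType) n (P : 'M[F]_n) : P *m P = P -> \tr P = (\rank P)%:R.
Proof.
move=> PP; have Pbase := mulmx_base P.
suff baseK : row_base P *m col_base P = 1%:M.
  by rewrite -{1}Pbase mxtrace_mulC baseK mxtrace1.
apply: (row_free_inj (row_base_free P)); rewrite mul1mx.
apply: (row_full_inj (col_base_full P)).
by rewrite Pbase mulmxA (mulmxA (col_base P)) Pbase -mulmxA Pbase.
Qed.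

Section States.
Variable R : rcfType.
Local Notation C := R[i].

Lemma Re_sum (I : Type) (r : seq I) (F : I -> C) :
  complex.Re (\sum_(i <- r) F i) = \sum_(i <- r) complex.Re (F i).
Proof. exact: (raddf_sum (@complex.Re R : Rcomplex R -> R)). Qed.

Lemma adjmx_entry m p (A : 'M[C]_(m, p)) i j : adjmx A i j = conjc (A j i).
Proof. by rewrite !mxE. Qed.

Lemma adjmxK m p (A : 'M[C]_(m, p)) : adjmx (adjmx A) = A.
Proof. by apply/matrixP => i j; rewrite !adjmx_entry conjcK. Qed.

Lemma adjmxD m p (A B : 'M[C]_(m, p)) : adjmx (A + B) = adjmx A + adjmx B.
Proof. by apply/matrixP => i j; rewrite !mxE rmorphD. Qed.

Lemma adjmxZ m p a (A : 'M[C]_(m, p)) : adjmx (a *: A) = conjc a *: adjmx A.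
Proof. by apply/matrixP => i j; rewrite !mxE rmorphM. Qed.

Lemma adjmxM m p q (A : 'M[C]_(m, p)) (B : 'M[C]_(p, q)) :
  adjmx (A *m B) = adjmx B *m adjmx A.
Proof. by rewrite /adjmx map_mxM trmx_mul. Qed.

Lemma adjmx_scalar n (a : C) : adjmx (a%:M : 'M_n) = (conjc a)%:M.
Proof. by apply/matrixP => i j; rewrite !mxE raddfMn eq_sym. Qed.

Lemma adjmx_delta n (k : 'I_n) : adjmx (delta_mx k 0 : 'cV[C]_n) = delta_mx 0 k.
Proof. by apply/matrixP => i j; rewrite adjmx_entry !mxE conjc_nat andbC. Qed.

Variable n : nat.
Implicit Types (u : 'cV[C]_n) (P S : 'M[C]_n).

Lemma adjmx_mul_self u : (adjmx u *m u) 0 0 = \sum_i `|u i 0| ^+ 2.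
Proof. by rewrite mxE; apply: eq_bigr => i _; rewrite adjmx_entry sqr_normc mulrC. Qed.

Lemma adjmx_mul_self_ge0 u : 0 <= (adjmx u *m u) 0 0.
Proof. by rewrite adjmx_mul_self sumr_ge0 // => i _; rewrite exprn_ge0. Qed.

Lemma pure_state_tr P : pure_state P -> \tr P = 1.
Proof. by case=> _ [PP rkP]; rewrite mxtrace_idem // rkP. Qed.

Lemma pure_state_density P : pure_state P -> density_op P.
Proof.
move=> Ppure; have [Pherm [PP _]] := Ppure; split=> //; split; last exact: pure_state_tr.
move=> x; have -> : adjmx x *m P *m x = adjmx (P *m x) *m (P *m x).
  by rewrite adjmxM Pherm -!mulmxA (mulmxA P) PP.
exact: adjmx_mul_self_ge0.
Qed.

Definition sqnorm u : R := complex.Re ((adjmx u *m u) 0 0).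

Lemma sqnormE u : (adjmx u *m u) 0 0 = (sqnorm u)%:C.
Proof. by have := adjmx_mul_self_ge0 u; rewrite /sqnorm; case: (_ 0 0) => a b /ger0_Im /= ->. Qed.

Lemma sqnorm_gt0 u : u != 0 -> 0 < sqnorm u.
Proof.
move=> u_neq0; rewrite -ltcR -sqnormE lt_def adjmx_mul_self_ge0 andbT.
apply: contra u_neq0; rewrite adjmx_mul_self psumr_eq0 => [/allP u0|i _]; last exact: exprn_ge0.
apply/eqP/matrixP => i j; rewrite ord1 mxE.
by have /implyP/(_ isT) := u0 i (mem_index_enum i); rewrite sqrf_eq0 normr_eq0 => /eqP.
Qed.

Definition proj u : 'M[C]_n := ((sqnorm u)^-1)%:C *: (u *m adjmx u).

Lemma Re_tr_proj u S :
  complex.Re (\tr (proj u *m S)) = (sqnorm u)^-1 * complex.Re ((adjmx u *m S *m u) 0 0).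
Proof.
rewrite -scalemxAl mxtraceZ -mulmxA mxtrace_mulC /mxtrace big_ord1.
by case: (_ 0 0) => a b /=; ring.
Qed.

Lemma proj_pure u : u != 0 -> pure_state (proj u).
Proof.
move=> u_neq0; have sqnorm_neq0 := lt0r_neq0 (sqnorm_gt0 u_neq0).
have uu : adjmx u *m u = (sqnorm u)%:C%:M by rewrite [LHS]mx11_scalar sqnormE.
have sqnormC_neq0 : (sqnorm u)%:C != 0 by rewrite (inj_eq (@complexI R)).
split; [|split].
- by rewrite /herm_op adjmxZ conjc_real adjmxM adjmxK.
- rewrite -scalemxAl -scalemxAr scalerA mulmxA -(mulmxA u) uu mul_mx_scalar.
  by rewrite -scalemxAl scalerA -!rmorphM /= -mulrA mulVf ?mulr1.
- rewrite mxrank_scale_nz ?(inj_eq (@complexI R)) ?invr_eq0 //.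
  apply/eqP; rewrite eqn_leq (leq_trans (mxrankM_maxl _ _) (rank_leq_col _)) /=.
  rewrite lt0n mxrank_eq0; apply: contraNneq sqnormC_neq0 => uu0.
  have /matrixP/(_ 0 0) : adjmx u *m (u *m adjmx u) *m u = 0 by rewrite uu0 mulmx0 mul0mx.
  by rewrite mulmxA -mulmxA uu mul_mx_scalar !mxE eqxx mulr1n => /eqP; rewrite mulf_eq0 orbb.
Qed.

Definition dvec (k l : 'I_n) (c : C) : 'cV[C]_n := delta_mx k 0 + c *: delta_mx l 0.

Lemma quad_dvec S k l c : (adjmx (dvec k l c) *m S *m dvec k l c) 0 0 =
  S k k + c * S k l + conjc c * S l k + conjc c * c * S l l.
Proof.
have deltaSdelta p q : delta_mx (0 : 'I_1) p *m S *m delta_mx q 0 = (S p q)%:M.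
  by apply/matrixP => i j; rewrite !ord1 -rowE -colE !mxE.
rewrite /dvec adjmxD adjmxZ !adjmx_delta.
rewrite mulmxDl !mulmxDr !mulmxDl -!scalemxAl -!scalemxAr !deltaSdelta !mxE /= !mulr1n.
by rewrite mulrA; ring.
Qed.

(* The quadratic forms of a Hermitian matrix at e_k, e_k + e_l and e_k + i e_l recover its
   diagonal and the real and imaginary parts of its off-diagonal entries. *)
Definition testvec (t : 'I_n * 'I_n * bool) : 'cV[C]_n :=
  let: (k, l, b) := t in dvec k l (if k == l then 0 else if b then 'i else 1).

Lemma testvec_neq0 t : testvec t != 0.
Proof.
case: t => [[k l] b]; apply/eqP => /matrixP/(_ k 0); rewrite !mxE !eqxx andbT.
by case: eqP => _; rewrite ?mul0r ?mulr0 addr0 => /eqP; rewrite oner_eq0.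
Qed.

Lemma herm_eq0_testvec S : herm_op S ->
  (forall t, complex.Re ((adjmx (testvec t) *m S *m testvec t) 0 0) = 0) -> S = 0.
Proof.
move=> Sherm S_test0.
have Sconj i j : conjc (S j i) = S i j by rewrite -adjmx_entry Sherm.
have Sdiag i : S i i = 0.
  move: (S_test0 (i, i, false)) (Sconj i i); rewrite quad_dvec eqxx.
  case: (S i i) => a b /=; rewrite !(mul0r, mulr0, addr0, oppr0) => -> [b0].
  by apply/eqP; rewrite eq_complex /= eqxx /=; apply/eqP; lra.
apply/matrixP => i j; rewrite mxE; have [<-|ij] := eqVneq i j; first exact: Sdiag.
move: (S_test0 (i, j, false)) (S_test0 (i, j, true)).
rewrite !quad_dvec (negPf ij) !Sdiag -(Sconj i j).
case: (S j i) => a b /= Re1 Rei.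
by apply/eqP; rewrite eq_complex /=; apply/andP; split; apply/eqP; lra.
Qed.

Lemma herm_eq0_proj_testvec S : herm_op S ->
  (forall t, complex.Re (\tr (proj (testvec t) *m S)) = 0) -> S = 0.
Proof.
move=> Sherm S_proj0; apply: herm_eq0_testvec => // t.
have /eqP := S_proj0 t; rewrite Re_tr_proj mulf_eq0 invr_eq0 => /orP[|/eqP //].
by rewrite (negPf (lt0r_neq0 (sqnorm_gt0 (testvec_neq0 t)))).
Qed.

End States.

Section AffineHulls.
Variables (R : rcfType) (V : vectType R).
Implicit Types X Y : (V -> R) -> Prop.

Lemma direction_aff_hull_mono X Y (f : V -> R) : (forall g, X g -> Y g) ->
  direction (aff_hull X) f -> direction (aff_hull Y) f.
Proof.
move=> XY [a [b [[k [c [g [Xg cg]]]] [[k' [c' [g' [Xg' cg']]]] ->]]]].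
exists a, b; split; [|split] => //.
- by exists k, c, g; split=> // i; apply: XY.
- by exists k', c', g'; split=> // i; apply: XY.
Qed.

Lemma direction_aff_hull_comb X (x0 : V -> R) k (z : 'I_k -> R) (g : 'I_k -> V -> R) :
  X x0 -> (forall t, X (g t)) -> \sum_(t < k) z t = 0 ->
  direction (aff_hull X) (fun v => \sum_(t < k) z t * g t v).
Proof.
move=> Xx0 Xg z_sum0.
pose c (i : 'I_k.+1) : R := if unlift ord0 i is Some t then z t else 1.
pose h (i : 'I_k.+1) : V -> R := if unlift ord0 i is Some t then g t else x0.
exists (fun v => \sum_(i < k.+1) c i * h i v), (fun v => \sum_(i < 1) 1 * x0 v).
split; [|split].
- exists k.+1, c, h; split; [|split] => //.
    by move=> i; rewrite /h; case: (unlift ord0 i).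
  by rewrite big_ord_recl /c unlift_none (eq_bigr z) ?z_sum0 ?addr0 // => t _; rewrite liftK.
- by exists 1%N, (fun _ => 1), (fun _ => x0); rewrite big_ord1.
- apply: functional_extensionality => v; rewrite big_ord1 big_ord_recl /c /h unlift_none.
  by rewrite addrC addKr; apply: eq_bigr => t _; rewrite liftK.
Qed.

End AffineHulls.

Section GeneralizedFunctionalTheory.
Variables (R : rcfType) (V : vectType R) (n : nat) (iota : V -> 'M[R[i]]_n).
Hypothesis iota_lin : real_linear_herm iota.

Lemma dual_map_lin G : lin_functional (dual_map iota G).
Proof.
move=> a u v; rewrite /dual_map iota_lin.2 mulmxDr -scalemxAr mxtraceD mxtraceZ.
by case: (\tr (G *m iota u)) => x y; case: (\tr (G *m iota v)) => x' y' /=; ring.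
Qed.

Lemma dual_map_sum k (z : 'I_k -> R) (G : 'I_k -> 'M[R[i]]_n) v :
  dual_map iota (\sum_(t < k) (z t)%:C *: G t) v = \sum_(t < k) z t * dual_map iota (G t) v.
Proof.
rewrite /dual_map mulmx_suml [\tr _]raddf_sum Re_sum.
apply: eq_bigr => t _; rewrite -scalemxAl /= mxtraceZ.
by case: (\tr (G t *m iota v)) => x y /=; ring.
Qed.

Lemma aff_hull_density_tr1 a : aff_hull (image_dual iota (@density_op R n)) a ->
  exists2 A, \tr A = 1 & a = dual_map iota A.
Proof.
case=> k [c [g [dens_g [c_sum1 ->]]]].
have [G G_dens gE] := fin_all_exists2 dens_g.
exists (\sum_(i < k) (c i)%:C *: G i).
  rewrite raddf_sum (eq_bigr (fun i => (c i)%:C)) => [|i _].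
    by rewrite -rmorph_sum c_sum1.
  by rewrite /= mxtraceZ (G_dens i).2.2 mulr1.
apply: functional_extensionality => v; rewrite dual_map_sum.
by apply: eq_bigr => i _; rewrite gE.
Qed.

Lemma direction_density_annihilator f :
  direction (aff_hull (image_dual iota (@density_op R n))) f -> annihilator_preim_id iota f.
Proof.
case=> a [b [/aff_hull_density_tr1[A trA ->] [/aff_hull_density_tr1[B trB ->] ->]]].
split=> [c u v|v [r iota_v]]; first by rewrite !dual_map_lin; ring.
by rewrite /dual_map iota_v !mul_mx_scalar !mxtraceZ trA trB subrr.
Qed.

Lemma iota_scalar_of_dual_testvec v (s : R) :
  (forall t, dual_map iota (proj (testvec R t)) v + s = 0) -> iota v = (- s)%:C%:M.
Proof.
move=> dual_test0; apply/eqP; rewrite rmorphN /= raddfN -addr_eq0; apply/eqP.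
apply: herm_eq0_proj_testvec => [|t].
  by rewrite /herm_op adjmxD adjmx_scalar conjc_real iota_lin.1.
rewrite mulmxDr mul_mx_scalar mxtraceD mxtraceZ (pure_state_tr (proj_pure (testvec_neq0 R t))).
by rewrite -[RHS](dual_test0 t) /dual_map mulr1; case: (\tr _).
Qed.

Lemma annihilator_direction_pure f : (0 < n)%N ->
  annihilator_preim_id iota f -> direction (aff_hull (image_dual iota (@pure_state R n))) f.
Proof.
move=> n_gt0 [f_lin f_ann].
pose T := ('I_n * 'I_n * bool)%type.
pose P (t : 'I_#|{:T}|) := proj (testvec R (enum_val t)).
have P_pure t : pure_state (P t) by apply/proj_pure/testvec_neq0.
have [z fE] : exists z : 'I_#|{:T}| -> R, forall p : V * R^o,
    f p.1 = \sum_t z t * (dual_map iota (P t) p.1 + p.2).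
  apply: lin_functional_in_span => [t a [u s] [u' s']|a [u s] [u' s']|[v s] /= dual_P0] /=.
  - by rewrite dual_map_lin -[a *: s]/(a * s); ring.
  - exact: f_lin.
  apply/f_ann; exists (- s); apply: iota_scalar_of_dual_testvec => t.
  by rewrite -(enum_rankK t); apply: dual_P0.
have z_sum0 : \sum_t z t = 0.
  have := fE (0, 1); rewrite /= lin_functional0 //.
  by under eq_bigr do rewrite (lin_functional0 (dual_map_lin _)) add0r mulr1; move/esym.
have -> : f = fun v => \sum_t z t * dual_map iota (P t) v.
  by apply: functional_extensionality => v; rewrite (fE (v, 0)); under eq_bigr do rewrite addr0.
pose t0 := enum_rank ((Ordinal n_gt0, Ordinal n_gt0, false) : T).
apply: (direction_aff_hull_comb (x0 := dual_map iota (P t0))) z_sum0; first by exists (P t0).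
by move=> t; exists (P t).
Qed.

End GeneralizedFunctionalTheory.

Theorem lemma2p11 (R : rcfType) (V : vectType R) (n : nat)
  (iota : V -> 'M[complex R]_n) (W : 'M[complex R]_n) :
  (0 < n)%N ->
  real_linear_herm iota -> herm_op W ->
  (forall f : V -> R,
     direction (aff_hull (image_dual iota (@pure_state R n))) f <->
     direction (aff_hull (image_dual iota (@density_op R n))) f) /\
  (forall f : V -> R,
     direction (aff_hull (image_dual iota (@density_op R n))) f <->
     annihilator_preim_id iota f).
Proof.
move=> n_gt0 iota_lin _.
have pure_density f : direction (aff_hull (image_dual iota (@pure_state R n))) f ->
    direction (aff_hull (image_dual iota (@density_op R n))) f.
  apply: direction_aff_hull_mono => _ [G G_pure ->].
  by exists G => //; apply: pure_state_density.
have density_ann := direction_density_annihilator iota_lin.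
have ann_pure := annihilator_direction_pure iota_lin n_gt0.
split=> f; split; by [apply: pure_density | move/density_ann/ann_pure | apply: density_ann
                     | move/ann_pure/pure_density].
Qed.
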